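(* Let $X$ be a complex Banach space and let $A:\mathcal{D}(\mathbb{R})\to L(X)$ be a linear map which is multiplicative, i.e. $A(\phi\psi)=A(\phi)A(\psi)$ for all $\phi,\psi\in\mathcal{D}(\mathbb{R})$ (no continuity is assumed). Then for every $\chi\in\mathcal{D}(\mathbb{R})$ the function $$\mathbb{C}\setminus\mathbb{R}\ni z\longmapsto A\Big(\xi\mapsto \frac{\chi(\xi)}{z-\xi}\Big)\in L(X)$$ is strongly holomorphic on $\mathbb{C}\setminus\mathbb{R}$.
   Context: $L(X)$ denotes the algebra of bounded linear operators on $X$ with the operator norm; $\mathcal{D}(\mathbb{R})=C_c^\infty(\mathbb{R})$ (complex-valued). For $z\notin\mathbb{R}$ the function $\xi\mapsto\chi(\xi)/(z-\xi)$ belongs to $\mathcal{D}(\mathbb{R})$. ''Strongly holomorphic'' means holomorphic as an $L(X)$-valued function (complex differentiable with respect to the operator norm). *)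

From Stdlib Require Import Reals.
From Coquelicot Require Import Coquelicot.

Definition smooth_C (f : R -> C) : Prop :=
  forall (n : nat) (t : R),
    ex_derive_n (fun s => Re (f s)) n t /\ ex_derive_n (fun s => Im (f s)) n t.

Definition compact_support (f : R -> C) : Prop :=
  exists M : R, forall t : R, (M < Rabs t)%R -> f t = 0%C.

Definition test_fun (f : R -> C) : Prop := smooth_C f /\ compact_support f.

Definition bounded_op {X : NormedModule C_AbsRing} (T : X -> X) : Prop :=
  (forall x y : X, T (plus x y) = plus (T x) (T y)) /\
  (forall (c : C) (x : X), T (scal c x) = scal c (T x)) /\
  (exists M : R, forall x : X, (norm (T x) <= M * norm x)%R).

(* F : C -> L(X) is holomorphic on the open set U with respect to the operator
   norm: at every z0 in U the difference quotients converge in operator norm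
   to some T in L(X).  ||S||_op <= eps is written out as
   forall x, ||S x|| <= eps ||x||. *)
Definition strongly_holomorphic_on {X : NormedModule C_AbsRing}
  (U : C -> Prop) (F : C -> X -> X) : Prop :=
  forall z0 : C, U z0 ->
    exists T : X -> X, bounded_op T /\
      forall eps : R, (0 < eps)%R ->
        exists delta : R, (0 < delta)%R /\
          forall z : C, U z -> z <> z0 -> (Cmod (z - z0)%C < delta)%R ->
            forall x : X,
              (norm (minus (scal (/ (z - z0))%C (minus (F z x) (F z0 x))) (T x))
                 <= eps * norm x)%R.

Definition nonreal (z : C) : Prop := Im z <> 0%R.

(* Fix w off the real line and a cutoff psi in D(R) with psi = 1 on the
   support of chi, and put f_z(xi) = chi(xi) / (z - xi), g(xi) = psi(xi) / (w - xi).
   Pointwise f_z = f_w + (w - z) f_z g, so multiplicativity of A gives the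
   resolvent identity A(f_z) = A(f_w) + (w - z) A(f_z) A(g).  Once
   |w - z| ||A(g)|| <= 1/2 this forces ||A(f_z)|| <= 2 ||A(f_w)||, and then
   (A(f_z) - A(f_w)) / (z - w) = - A(f_z) A(g) differs from - A(f_w) A(g) by
   (w - z) A(f_z) A(g)^2, which is O(|z - w|) in operator norm.  The cutoff
   is the usual one built from exp(-1/x). *)

From Stdlib Require Import Reals Lra Factorial FunctionalExtensionality.
From Coquelicot Require Import Coquelicot.
Open Scope R_scope.

Fixpoint Cn (n : nat) (f : R -> R) : Prop :=
  match n with
  | O => True
  | S n => (forall t, ex_derive f t) /\ Cn n (Derive f)
  end.

Definition smooth (f : R -> R) : Prop := forall n, Cn n f.

Lemma ex_derive_n_Derive f n t :
  ex_derive_n (Derive f) (S n) t <-> ex_derive_n f (S (S n)) t.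
Proof.
  assert (HD : forall s, Derive_n (Derive f) n s = Derive_n f (S n) s).
  { intro s; rewrite <- Nat.add_1_r; exact (Derive_n_comp f n 1 s). }
  split; apply ex_derive_ext; intro s; [|symmetry]; apply HD.
Qed.

Lemma smooth_iff_ex_derive_n f : smooth f <-> forall n t, ex_derive_n f n t.
Proof.
  split.
  - intros Hf n; revert f Hf; induction n as [|[|n] IHn]; intros f Hf t.
    + exact I.
    + destruct (Hf 1%nat) as [Hf1 _]; apply Hf1.
    + apply (ex_derive_n_Derive f n t), IHn.
      intro k; destruct (Hf (S k)) as [_ Hk]; exact Hk.
  - intros Hf n; revert f Hf; induction n as [|n IHn]; intros f Hf; [exact I|].
    split; [apply (Hf 1%nat)|].
    apply IHn; intros [|k] t; [exact I|].
    apply (ex_derive_n_Derive f k t), Hf.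
Qed.

Lemma Cn_ext n f g : (forall t, f t = g t) -> Cn n f -> Cn n g.
Proof.
  revert f g; induction n as [|n IHn]; intros f g Efg; [easy|].
  intros [Hf Hf']; split.
  - intro t; apply (ex_derive_ext f); auto.
  - apply (IHn (Derive f)); [|exact Hf'].
    intro t; apply Derive_ext, Efg.
Qed.

Lemma Cn_pred n f : Cn (S n) f -> Cn n f.
Proof.
  revert f; induction n as [|n IHn]; intros f Cf; [exact I|].
  destruct Cf as [Hf Hf']; split; [exact Hf|apply IHn, Hf'].
Qed.

Lemma Cn_const n c : Cn n (fun _ => c).
Proof.
  revert c; induction n as [|n IHn]; intro c; [exact I|].
  split; [intro; apply ex_derive_const|].
  apply (Cn_ext n (fun _ => 0)); [intro; symmetry; apply Derive_const|apply IHn].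
Qed.

Lemma Cn_id n : Cn n (fun t => t).
Proof.
  destruct n as [|n]; [exact I|].
  split; [intro; apply ex_derive_id|].
  apply (Cn_ext n (fun _ => 1)); [intro; symmetry; apply Derive_id|apply Cn_const].
Qed.

Lemma Cn_plus n f g : Cn n f -> Cn n g -> Cn n (fun t => f t + g t).
Proof.
  revert f g; induction n as [|n IHn]; intros f g Cf Cg; [exact I|].
  destruct Cf as [Hf Hf'], Cg as [Hg Hg'].
  split; [intro t; apply (ex_derive_plus f g); auto|].
  apply (Cn_ext n (fun t => Derive f t + Derive g t)); [|apply IHn; auto].
  intro t; symmetry; apply Derive_plus; auto.
Qed.

Lemma Cn_mult n f g : Cn n f -> Cn n g -> Cn n (fun t => f t * g t).
Proof.
  revert f g; induction n as [|n IHn]; intros f g Cf Cg; [exact I|].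
  pose proof (Cn_pred _ _ Cf) as Cf0; pose proof (Cn_pred _ _ Cg) as Cg0.
  destruct Cf as [Hf Hf'], Cg as [Hg Hg'].
  split; [intro t; apply ex_derive_mult; auto|].
  apply (Cn_ext n (fun t => Derive f t * g t + f t * Derive g t)).
  - intro t; symmetry; apply Derive_mult; auto.
  - apply Cn_plus; apply IHn; auto.
Qed.

Lemma Cn_inv n f : Cn n f -> (forall t, f t <> 0) -> Cn n (fun t => / f t).
Proof.
  revert f; induction n as [|n IHn]; intros f Cf Hf0; [exact I|].
  pose proof (Cn_pred _ _ Cf) as Cf0.
  destruct Cf as [Hf Hf'].
  split; [intro t; apply ex_derive_inv; auto|].
  apply (Cn_ext n (fun t => -1 * (Derive f t * (/ f t * / f t)))).
  - intro t; rewrite Derive_inv; auto.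
    specialize (Hf0 t); field; auto.
  - apply Cn_mult; [apply Cn_const|apply Cn_mult; [exact Hf'|apply Cn_mult; apply IHn; auto]].
Qed.

Lemma Cn_comp_affine n f a b : Cn n f -> Cn n (fun t => f (a * t + b)).
Proof.
  revert f; induction n as [|n IHn]; intros f Cf; [exact I|].
  destruct Cf as [Hf Hf'].
  assert (D : forall t, is_derive (fun t => f (a * t + b)) t (a * Derive f (a * t + b))).
  { intro t; apply (is_derive_comp f (fun t => a * t + b)).
    - apply Derive_correct, Hf.
    - auto_derive; [easy|ring]. }
  split; [intro t; eexists; apply D|].
  apply (Cn_ext n (fun t => a * Derive f (a * t + b))).
  - intro t; symmetry; apply is_derive_unique, D.
  - apply Cn_mult; [apply Cn_const|apply IHn, Hf'].
Qed.

Definition flat_exp (k : nat) (x : R) : R :=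
  if Rlt_dec 0 x then (/ x) ^ k * exp (- / x) else 0.

Lemma flat_exp_pos k x : 0 < x -> flat_exp k x = (/ x) ^ k * exp (- / x).
Proof. intro Hx; unfold flat_exp; destruct Rlt_dec; [easy|lra]. Qed.

Lemma flat_exp_nonpos k x : x <= 0 -> flat_exp k x = 0.
Proof. intro Hx; unfold flat_exp; destruct Rlt_dec; [lra|easy]. Qed.

Lemma flat_exp_ge0 k x : 0 <= flat_exp k x.
Proof.
  destruct (Rlt_dec 0 x) as [Hx|Hx]; [|rewrite flat_exp_nonpos; lra].
  rewrite flat_exp_pos by exact Hx.
  apply Rmult_le_pos; [apply pow_le; left; apply Rinv_0_lt_compat, Hx|left; apply exp_pos].
Qed.

Lemma flat_exp0_gt0 x : 0 < x -> 0 < flat_exp 0 x.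
Proof. intro Hx; rewrite flat_exp_pos by exact Hx; rewrite pow_O, Rmult_1_l; apply exp_pos. Qed.

Lemma pow_le_fact_exp n y : 0 <= y -> y ^ n <= INR (fact n) * exp y.
Proof.
  intro Hy.
  assert (Hfact : 0 < INR (fact n)) by apply INR_fact_lt_0.
  assert (Hterm : y ^ n / INR (fact n) <= exp y).
  { eapply Rle_trans; [|apply (exp_ge_taylor y n Hy)].
    destruct n as [|m]; [simpl; lra|].
    rewrite tech5.
    assert (0 <= sum_f_R0 (fun k => y ^ k / INR (fact k)) m); [|lra].
    apply cond_pos_sum; intro k.
    apply Rdiv_le_0_compat; [apply pow_le, Hy|apply INR_fact_lt_0]. }
  apply (Rmult_le_compat_l (INR (fact n))) in Hterm; [|lra].
  replace (INR (fact n) * (y ^ n / INR (fact n))) with (y ^ n) in Hterm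
    by (field; lra).
  exact Hterm.
Qed.

Lemma flat_exp_le_sqr k h : flat_exp k h <= INR (fact (S (S k))) * h ^ 2.
Proof.
  assert (Hfact : 0 < INR (fact (S (S k)))) by apply INR_fact_lt_0.
  destruct (Rlt_dec 0 h) as [Hh|Hh]; [|rewrite flat_exp_nonpos by lra; nra].
  rewrite flat_exp_pos by exact Hh.
  set (y := / h).
  assert (Hy : 0 < y) by (apply Rinv_0_lt_compat, Hh).
  assert (Eh : h = / y) by (unfold y; rewrite Rinv_inv; reflexivity).
  pose proof (pow_le_fact_exp (S (S k)) y (Rlt_le _ _ Hy)) as Hpow.
  assert (Hexp : exp (- y) * exp y = 1) by (rewrite <- exp_plus, Rplus_opp_l; apply exp_0).
  rewrite Eh.
  apply (Rmult_le_reg_r (y ^ 2 * exp y)).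
  { apply Rmult_lt_0_compat; [apply pow_lt, Hy|apply exp_pos]. }
  replace (y ^ k * exp (- y) * (y ^ 2 * exp y)) with (y ^ (S (S k)) * (exp (- y) * exp y))
    by (simpl; ring).
  replace (INR (fact (S (S k))) * (/ y) ^ 2 * (y ^ 2 * exp y)) with (INR (fact (S (S k))) * exp y)
    by (field; lra).
  rewrite Hexp, Rmult_1_r; exact Hpow.
Qed.

Lemma is_derive_of_sqr_bound (f : R -> R) x C :
  (forall h, Rabs (f (x + h) - f x) <= C * h ^ 2) -> is_derive f x 0.
Proof.
  intro Hf; apply is_derive_Reals; intros eps Heps.
  pose proof (Rabs_pos C) as HC; pose proof (Rle_abs C) as HC'.
  assert (Hd : 0 < eps / (Rabs C + 1)) by (apply Rdiv_lt_0_compat; lra).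
  exists (mkposreal _ Hd); intros h Hh0 Hh; simpl in Hh.
  pose proof (Rabs_pos_lt h Hh0) as Hh_pos.
  rewrite Rminus_0_r; unfold Rdiv; rewrite Rabs_mult, Rabs_inv.
  apply (Rmult_lt_reg_r (Rabs h)); [exact Hh_pos|].
  rewrite Rmult_assoc, Rinv_l, Rmult_1_r by lra.
  apply (Rmult_lt_compat_r (Rabs h)) in Hh; [|exact Hh_pos].
  replace (eps / (Rabs C + 1) * Rabs h) with (eps * Rabs h / (Rabs C + 1)) in Hh by (field; lra).
  apply (Rle_lt_trans _ (C * h ^ 2)); [apply Hf|].
  rewrite <- (pow2_abs h).
  apply (Rmult_lt_compat_r (Rabs C + 1)) in Hh; [|lra].
  replace (eps * Rabs h / (Rabs C + 1) * (Rabs C + 1)) with (eps * Rabs h) in Hh by (field; lra).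
  nra.
Qed.

Lemma is_derive_flat_exp k x :
  is_derive (flat_exp k) x (- INR k * flat_exp (S k) x + flat_exp (S (S k)) x).
Proof.
  destruct (Rtotal_order x 0) as [Hx|[Hx|Hx]].
  - rewrite !flat_exp_nonpos by lra; rewrite Rmult_0_r, Rplus_0_l.
    apply (is_derive_ext_loc (fun _ => 0)); [|apply (@is_derive_const R_AbsRing)].
    apply (open_lt 0) in Hx; revert Hx; apply filter_imp; intros t Ht.
    symmetry; apply flat_exp_nonpos; lra.
  - subst x; rewrite !flat_exp_nonpos by lra; rewrite Rmult_0_r, Rplus_0_l.
    apply (is_derive_of_sqr_bound _ 0 (INR (fact (S (S k))))); intro h.
    rewrite Rplus_0_l, (flat_exp_nonpos k 0), Rminus_0_r by lra.
    rewrite Rabs_pos_eq by apply flat_exp_ge0; apply flat_exp_le_sqr.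
  - rewrite !flat_exp_pos by exact Hx.
    apply (is_derive_ext_loc (fun t => (/ t) ^ k * exp (- / t))).
    + apply (open_gt 0) in Hx; revert Hx; apply filter_imp; intros t Ht.
      symmetry; apply flat_exp_pos, Ht.
    + auto_derive; [lra|].
      destruct k; simpl; field; lra.
Qed.

Lemma Cn_flat_exp n k : Cn n (flat_exp k).
Proof.
  revert k; induction n as [|n IHn]; intro k; [exact I|].
  split; [intro t; eexists; apply is_derive_flat_exp|].
  apply (Cn_ext n (fun x => - INR k * flat_exp (S k) x + flat_exp (S (S k)) x)).
  - intro t; symmetry; apply is_derive_unique, is_derive_flat_exp.
  - apply Cn_plus; [apply Cn_mult; [apply Cn_const|]|]; apply IHn.
Qed.

Definition step (x : R) : R := flat_exp 0 x / (flat_exp 0 x + flat_exp 0 (1 - x)).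

Lemma step_denominator_pos x : 0 < flat_exp 0 x + flat_exp 0 (1 - x).
Proof.
  pose proof (flat_exp_ge0 0 x); pose proof (flat_exp_ge0 0 (1 - x)).
  destruct (Rlt_dec 0 x) as [Hx|Hx].
  - pose proof (flat_exp0_gt0 x Hx); lra.
  - pose proof (flat_exp0_gt0 (1 - x) ltac:(lra)); lra.
Qed.

Lemma smooth_step : smooth step.
Proof.
  intro n; unfold step, Rdiv.
  apply Cn_mult; [apply Cn_flat_exp|].
  apply Cn_inv; [|intro t; apply Rgt_not_eq, step_denominator_pos].
  apply Cn_plus; [apply Cn_flat_exp|].
  apply (Cn_ext n (fun t => flat_exp 0 (-1 * t + 1))); [intro t; f_equal; ring|].
  apply Cn_comp_affine, Cn_flat_exp.
Qed.

Lemma step_ge1 x : 1 <= x -> step x = 1.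
Proof.
  intro Hx; unfold step; rewrite (flat_exp_nonpos 0 (1 - x)) by lra.
  pose proof (flat_exp0_gt0 x ltac:(lra)); field; lra.
Qed.

Lemma step_le0 x : x <= 0 -> step x = 0.
Proof. intro Hx; unfold step; rewrite (flat_exp_nonpos 0 x) by exact Hx; unfold Rdiv; ring. Qed.

Definition bump (c x : R) : R := step (c + x) * step (c - x).

Lemma smooth_bump c : smooth (bump c).
Proof.
  intro n; unfold bump; apply Cn_mult.
  - apply (Cn_ext n (fun t => step (1 * t + c))); [intro t; f_equal; ring|].
    apply Cn_comp_affine, smooth_step.
  - apply (Cn_ext n (fun t => step (-1 * t + c))); [intro t; f_equal; ring|].
    apply Cn_comp_affine, smooth_step.
Qed.

Lemma bump_eq1 c x : Rabs x <= c - 1 -> bump c x = 1.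
Proof.
  intro Hx; apply Rabs_le_between in Hx.
  unfold bump; rewrite !step_ge1 by lra; ring.
Qed.

Lemma bump_eq0 c x : c <= Rabs x -> bump c x = 0.
Proof.
  intro Hx; unfold bump.
  destruct (Rle_dec 0 x).
  - rewrite Rabs_pos_eq in Hx by lra; rewrite (step_le0 (c - x)) by lra; ring.
  - rewrite Rabs_left in Hx by lra; rewrite (step_le0 (c + x)) by lra; ring.
Qed.

Lemma smooth_C_iff f :
  smooth_C f <-> smooth (fun t => Re (f t)) /\ smooth (fun t => Im (f t)).
Proof.
  rewrite !smooth_iff_ex_derive_n; unfold smooth_C.
  split; [intro Hf; split; intros n t; apply Hf|intros [HRe HIm] n t; auto].
Qed.

Lemma smooth_C_mult f g :
  smooth_C f -> smooth_C g -> smooth_C (fun t => f t * g t)%C.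
Proof.
  rewrite !smooth_C_iff; intros [Ref Imf] [Reg Img]; split; intro n.
  - apply (Cn_ext n (fun t => Re (f t) * Re (g t) + -1 * (Im (f t) * Im (g t)))).
    + intro t; unfold Re, Im; simpl; ring.
    + apply Cn_plus; [|apply Cn_mult; [apply Cn_const|]]; apply Cn_mult; auto.
  - apply (Cn_ext n (fun t => Re (f t) * Im (g t) + Im (f t) * Re (g t))).
    + intro t; unfold Re, Im; simpl; ring.
    + apply Cn_plus; apply Cn_mult; auto.
Qed.

Lemma smooth_C_inv g :
  smooth_C g -> (forall t, g t <> 0%C) -> smooth_C (fun t => / g t)%C.
Proof.
  rewrite !smooth_C_iff; intros [Reg Img] Hg0.
  set (sqnorm := fun t => Re (g t) * Re (g t) + Im (g t) * Im (g t)).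
  assert (Hinv : forall n, Cn n (fun t => / sqnorm t)).
  { intro n; apply Cn_inv; [apply Cn_plus; apply Cn_mult; auto|].
    intros t Ht; apply (Hg0 t); unfold sqnorm, Re, Im in Ht.
    destruct (g t) as [a b]; simpl in Ht.
    assert (a = 0) by nra; assert (b = 0) by nra; subst; reflexivity. }
  split; intro n.
  - apply (Cn_ext n (fun t => Re (g t) * / sqnorm t)); [|apply Cn_mult; auto].
    intro t; unfold sqnorm, Re, Im; simpl; unfold Rdiv; f_equal; f_equal; ring.
  - apply (Cn_ext n (fun t => -1 * Im (g t) * / sqnorm t)).
    + intro t; unfold sqnorm, Re, Im; simpl; unfold Rdiv; f_equal; [ring|f_equal; ring].
    + apply Cn_mult; [apply Cn_mult; [apply Cn_const|apply Img]|apply Hinv].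
Qed.

Lemma smooth_C_const c : smooth_C (fun _ => c).
Proof. apply smooth_C_iff; split; intro n; apply Cn_const. Qed.

Lemma smooth_C_RtoC f : smooth f -> smooth_C (fun t => RtoC (f t)).
Proof.
  intro Hf; apply smooth_C_iff; split; [exact Hf|intro n].
  apply (Cn_ext n (fun _ => 0)); [reflexivity|apply Cn_const].
Qed.

Lemma smooth_C_sub_RtoC z : smooth_C (fun t => z - RtoC t)%C.
Proof.
  apply smooth_C_iff; split; intro n.
  - apply (Cn_ext n (fun t => -1 * t + Re z)); [intro t; unfold Re; simpl; ring|].
    apply Cn_plus; [apply Cn_mult; [apply Cn_const|apply Cn_id]|apply Cn_const].
  - apply (Cn_ext n (fun _ => Im z)); [intro t; unfold Im; simpl; ring|apply Cn_const].
Qed.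

Lemma sub_RtoC_neq0 z t : nonreal z -> (z - RtoC t)%C <> 0%C.
Proof. intros Hz H; apply Hz; apply (f_equal Im) in H; unfold Im in *; simpl in H; lra. Qed.

Lemma test_fun_mulr f g : test_fun f -> smooth_C g -> test_fun (fun t => f t * g t)%C.
Proof.
  intros [Hf [M HM]] Hg; split; [apply smooth_C_mult; assumption|].
  exists M; intros t Ht; rewrite HM by exact Ht; apply Cmult_0_l.
Qed.

Lemma test_fun_mull g f : smooth_C g -> test_fun f -> test_fun (fun t => g t * f t)%C.
Proof.
  intros Hg [Hf [M HM]]; split; [apply smooth_C_mult; assumption|].
  exists M; intros t Ht; rewrite HM by exact Ht; apply Cmult_0_r.
Qed.

Lemma test_fun_div_sub_RtoC f z :
  test_fun f -> nonreal z -> test_fun (fun t => f t / (z - RtoC t))%C.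
Proof.
  intros Hf Hz; apply test_fun_mulr; [exact Hf|].
  apply smooth_C_inv; [apply smooth_C_sub_RtoC|intro t; apply sub_RtoC_neq0, Hz].
Qed.

Lemma compact_support_cutoff f :
  compact_support f -> exists psi, test_fun psi /\ forall t, (psi t * f t)%C = f t.
Proof.
  intros [M HM]; set (c := Rabs M + 1).
  exists (fun t => RtoC (bump c t)); split; [split|].
  - apply smooth_C_RtoC, smooth_bump.
  - exists c; intros t Ht; rewrite bump_eq0 by lra; reflexivity.
  - intro t; destruct (Rlt_dec M (Rabs t)) as [Ht|Ht]; [rewrite HM by exact Ht; apply Cmult_0_r|].
    rewrite bump_eq1; [apply Cmult_1_l|].
    pose proof (Rle_abs M); unfold c; lra.
Qed.

Lemma minus_plus_l {G : AbelianGroup} (a s : G) : minus (plus a s) a = s.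
Proof.
  unfold minus; rewrite (plus_comm a s), <- plus_assoc.
  transitivity (plus s zero); [f_equal; apply plus_opp_r|apply plus_zero_r].
Qed.

Lemma minus_opp_opp {G : AbelianGroup} (u v : G) : minus (opp u) (opp v) = opp (minus u v).
Proof. unfold minus; symmetry; apply opp_plus. Qed.

Section ResolventFamily.

Context {X : NormedModule C_AbsRing}.

Definition op_bound (T : X -> X) (M : R) : Prop := forall x, norm (T x) <= M * norm x.

Lemma op_bound_le (T : X -> X) M M' : M <= M' -> op_bound T M -> op_bound T M'.
Proof.
  intros HM HT x; eapply Rle_trans; [apply HT|].
  apply Rmult_le_compat_r; [apply norm_ge_0|exact HM].
Qed.

Lemma op_bound_comp (S T : X -> X) a b :
  0 <= a -> op_bound S a -> op_bound T b -> op_bound (fun x => S (T x)) (a * b).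
Proof.
  intros Ha HS HT x; eapply Rle_trans; [apply HS|].
  rewrite Rmult_assoc; apply Rmult_le_compat_l; [exact Ha|apply HT].
Qed.

Lemma bounded_op_bound (T : X -> X) : bounded_op T -> exists M, 0 <= M /\ op_bound T M.
Proof.
  intros [_ [_ [M HM]]]; exists (Rmax 0 M); split; [apply Rmax_l|].
  apply (op_bound_le T M); [apply Rmax_r|exact HM].
Qed.

Lemma bounded_op_comp (S T : X -> X) :
  bounded_op S -> bounded_op T -> bounded_op (fun x => S (T x)).
Proof.
  intros HS HT.
  destruct (bounded_op_bound S HS) as [a [Ha HSa]].
  destruct HS as [Sadd [Sscal _]], HT as [Tadd [Tscal [b HTb]]].
  split; [|split].
  - intros x y; rewrite Tadd; apply Sadd.
  - intros c x; rewrite Tscal; apply Sscal.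
  - exists (a * b); apply op_bound_comp; assumption.
Qed.

Lemma bounded_op_opp (T : X -> X) : bounded_op T -> bounded_op (fun x => opp (T x)).
Proof.
  intros [Tadd [Tscal [M HM]]]; split; [|split].
  - intros x y; rewrite Tadd; exact (opp_plus (T x) (T y)).
  - intros c x; rewrite Tscal; symmetry; exact (scal_opp_r c (T x)).
  - exists M; intro x; rewrite norm_opp; apply HM.
Qed.

(* The bounds [2 a + B / 2 ^ n] all hold and decrease to [2 a]. *)
Lemma op_bound_of_halving (T : X -> X) a B :
  0 <= a -> 0 <= B -> op_bound T B ->
  (forall M, 0 <= M -> op_bound T M -> op_bound T (a + M / 2)) ->
  op_bound T (2 * a).
Proof.
  intros Ha HB HTB Hhalf.
  assert (Hn : forall n, op_bound T (2 * a + B * (/ 2) ^ n)).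
  { induction n as [|n IHn].
    - apply (op_bound_le T B); [simpl; lra|exact HTB].
    - pose proof (pow_le (/ 2) n ltac:(lra)) as Hpow.
      replace (2 * a + B * (/ 2) ^ S n) with (a + (2 * a + B * (/ 2) ^ n) / 2) by (simpl; field).
      apply Hhalf; [nra|exact IHn]. }
  intro x; apply Rle_plus_epsilon; intros eps Heps.
  pose proof (norm_ge_0 x) as Hx.
  assert (Hy : 0 < eps / (B * norm x + 1)) by (apply Rdiv_lt_0_compat; nra).
  destruct (pow_lt_1_zero (/ 2) ltac:(rewrite Rabs_pos_eq; lra) _ Hy) as [N HN].
  specialize (HN N (le_n N)); rewrite Rabs_pos_eq in HN by (apply pow_le; lra).
  apply (Rmult_lt_compat_l (B * norm x + 1)) in HN; [|nra].
  replace ((B * norm x + 1) * (eps / (B * norm x + 1))) with eps in HN by (field; nra).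
  pose proof (pow_le (/ 2) N ltac:(lra)).
  eapply Rle_trans; [apply (Hn N)|nra].
Qed.

Lemma resolvent_op_bound (Fz Fw G : X -> X) (c : C) a b B :
  (forall x, Fz x = plus (Fw x) (scal c (Fz (G x)))) ->
  0 <= a -> op_bound Fw a -> 0 <= b -> op_bound G b -> abs c * b <= 1 / 2 ->
  0 <= B -> op_bound Fz B -> op_bound Fz (2 * a).
Proof.
  intros Hres Ha HFw Hb HG Hc HB HFz.
  apply (op_bound_of_halving Fz a B Ha HB HFz); intros M HM HFzM x.
  rewrite Hres; eapply Rle_trans; [apply norm_triangle|].
  eapply Rle_trans; [apply Rplus_le_compat_l; exact (norm_scal (V := X) c (Fz (G x)))|].
  pose proof (op_bound_comp Fz G M b HM HFzM HG x) as HFzG.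
  pose proof (abs_ge_0 c); pose proof (norm_ge_0 x).
  assert (abs c * norm (Fz (G x)) <= M / 2 * norm x).
  { eapply Rle_trans; [apply Rmult_le_compat_l; [assumption|exact HFzG]|].
    replace (abs c * (M * b * norm x)) with (abs c * b * (M * norm x)) by ring.
    replace (M / 2 * norm x) with (1 / 2 * (M * norm x)) by field.
    apply Rmult_le_compat_r; [apply Rmult_le_pos|]; assumption. }
  pose proof (HFw x); lra.
Qed.

Lemma resolvent_difference_quotient (Fz Fw G : X -> X) (z w : C) x :
  (forall x, Fz x = plus (Fw x) (scal (w - z)%C (Fz (G x)))) -> z <> w ->
  minus (scal (/ (z - w))%C (minus (Fz x) (Fw x))) (opp (Fw (G x)))
  = opp (scal (w - z)%C (Fz (G (G x)))).
Proof.
  intros Hres Hzw.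
  assert (Hzw' : (z - w)%C <> 0%C).
  { intro H; apply Hzw; replace z with ((z - w) + w)%C by ring; rewrite H; ring. }
  rewrite (Hres x), (minus_plus_l (Fw x)), (scal_assoc (V := X)).
  assert (Hcoef : (/ (z - w) * (w - z))%C = Copp 1) by (field; exact Hzw').
  change (mult (/ (z - w))%C (w - z)%C) with (/ (z - w) * (w - z))%C; rewrite Hcoef.
  rewrite (scal_opp_one (V := X)), (minus_opp_opp (G := X)), (Hres (G x)).
  rewrite (minus_plus_l (Fw (G x))); reflexivity.
Qed.

Definition has_op_derivative (U : C -> Prop) (F : C -> X -> X) (z0 : C) (T : X -> X) :=
  forall eps : R, 0 < eps ->
    exists delta : R, 0 < delta /\
      forall z : C, U z -> z <> z0 -> Cmod (z - z0)%C < delta ->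
        forall x : X,
          norm (minus (scal (/ (z - z0))%C (minus (F z x) (F z0 x))) (T x)) <= eps * norm x.

Lemma resolvent_family_derivative (U : C -> Prop) (F : C -> X -> X) (G : X -> X) (w : C) :
  (forall z, U z -> bounded_op (F z)) -> U w -> bounded_op G ->
  (forall z, U z -> forall x, F z x = plus (F w x) (scal (w - z)%C (F z (G x)))) ->
  has_op_derivative U F w (fun x => opp (F w (G x))).
Proof.
  intros HF Hw HG Hres eps Heps.
  destruct (bounded_op_bound _ (HF w Hw)) as [a [Ha HFw]].
  destruct (bounded_op_bound _ HG) as [b [Hb HGb]].
  set (K := 2 * a * (b * b)).
  assert (HK : 0 <= K) by (unfold K; nra).
  exists (Rmin (/ (2 * (b + 1))) (eps / (K + 1))); split.
  { apply Rmin_glb_lt; [apply Rinv_0_lt_compat; lra|apply Rdiv_lt_0_compat; lra]. }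
  intros z Hz Hzw Hdist x.
  assert (Habs : abs (w - z)%C = Cmod (z - w)%C).
  { change (Cmod (w - z) = Cmod (z - w)); rewrite <- Cmod_opp; f_equal; ring. }
  pose proof (Cmod_ge_0 (z - w)%C) as Hd0.
  assert (Hd1 : Cmod (z - w) * (b + 1) <= 1 / 2).
  { apply (Rle_trans _ (/ (2 * (b + 1)) * (b + 1))); [|right; field; lra].
    apply Rmult_le_compat_r; [lra|].
    left; eapply Rlt_le_trans; [exact Hdist|apply Rmin_l]. }
  assert (Hd2 : Cmod (z - w) * K <= eps).
  { apply (Rle_trans _ (eps / (K + 1) * K)).
    - apply Rmult_le_compat_r; [exact HK|].
      left; eapply Rlt_le_trans; [exact Hdist|apply Rmin_r].
    - replace (eps / (K + 1) * K) with (eps - eps / (K + 1)) by (field; lra).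
      assert (0 < eps / (K + 1)) by (apply Rdiv_lt_0_compat; lra); lra. }
  destruct (bounded_op_bound _ (HF z Hz)) as [B [HB HFzB]].
  assert (HFz : op_bound (F z) (2 * a)).
  { apply (resolvent_op_bound (F z) (F w) G (w - z)%C a b B (Hres z Hz)); try assumption.
    rewrite Habs; nra. }
  rewrite (resolvent_difference_quotient (F z) (F w) G z w x (Hres z Hz) Hzw), (norm_opp (V := X)).
  eapply Rle_trans; [exact (norm_scal (V := X) (w - z)%C (F z (G (G x))))|]; rewrite Habs.
  pose proof (op_bound_comp (F z) (fun y => G (G y)) (2 * a) (b * b) ltac:(lra) HFz
                (op_bound_comp G G b b Hb HGb HGb) x) as HN.
  pose proof (norm_ge_0 x).
  eapply Rle_trans; [apply Rmult_le_compat_l; [exact Hd0|exact HN]|].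
  fold K; nra.
Qed.

End ResolventFamily.

Lemma Cdiv_resolvent (c p z w u : C) :
  (p * c = c)%C -> (z - u)%C <> 0%C -> (w - u)%C <> 0%C ->
  (c / (z - u) = c / (w - u) + (w - z) * (c / (z - u) * (p / (w - u))))%C.
Proof.
  intros Hpc Hz Hw.
  transitivity (c / (w - u) + (w - z) * (p * c / ((z - u) * (w - u))))%C.
  - rewrite Hpc; field; split; assumption.
  - field; split; assumption.
Qed.

Theorem lemma2p1 (X : CompleteNormedModule C_AbsRing) (A : (R -> C) -> X -> X)
  (A_bounded : forall phi, test_fun phi -> bounded_op (A phi))
  (A_add : forall phi psi, test_fun phi -> test_fun psi ->
     forall x, A (fun t => (phi t + psi t)%C) x = plus (A phi x) (A psi x))
  (A_scal : forall (c : C) phi, test_fun phi ->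
     forall x, A (fun t => (c * phi t)%C) x = scal c (A phi x))
  (A_mul : forall phi psi, test_fun phi -> test_fun psi ->
     forall x, A (fun t => (phi t * psi t)%C) x = A phi (A psi x)) :
  forall chi : R -> C, test_fun chi ->
    strongly_holomorphic_on nonreal
      (fun z : C => A (fun xi : R => (chi xi / (z - RtoC xi))%C)).
Proof.
  intros chi Hchi w Hw.
  destruct (compact_support_cutoff chi (proj2 Hchi)) as [psi [Hpsi Hpsi_chi]].
  set (f := fun z xi => (chi xi / (z - RtoC xi))%C).
  set (g := fun xi => (psi xi / (w - RtoC xi))%C).
  assert (Hf : forall z, nonreal z -> test_fun (f z))
    by (intros z Hz; apply test_fun_div_sub_RtoC; assumption).
  assert (Hg : test_fun g) by (apply test_fun_div_sub_RtoC; assumption).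
  assert (Hres : forall z, nonreal z -> forall x,
             A (f z) x = plus (A (f w) x) (scal (w - z)%C (A (f z) (A g x)))).
  { intros z Hz x.
    pose proof (test_fun_mulr (f z) g (Hf z Hz) (proj1 Hg)) as Hfg.
    rewrite <- (A_mul (f z) g (Hf z Hz) Hg), <- (A_scal (w - z)%C _ Hfg),
      <- (A_add (f w) _ (Hf w Hw) (test_fun_mull _ _ (smooth_C_const (w - z)) Hfg)).
    apply (f_equal (fun phi => A phi x)), functional_extensionality; intro t.
    apply Cdiv_resolvent; [apply Hpsi_chi|apply sub_RtoC_neq0; assumption..]. }
  exists (fun x => opp (A (f w) (A g x))); split.
  - apply (@bounded_op_opp X), (@bounded_op_comp X); apply A_bounded; auto.
  - exact (resolvent_family_derivative nonreal (fun z => A (f z)) (A g) w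
             (fun z Hz => A_bounded _ (Hf z Hz)) Hw (A_bounded g Hg) Hres).
Qed.
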